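(* Let $A\in\mathbb{Z}^{d\times n}$, $\mathbf{b}\in\mathbb{Z}^d$, $\mathbf{c}\in\mathbb{Z}^n$, $\mathbf{u}\in\mathbb{Z}_{\ge0}^n$, and consider the ILP $\min\{\mathbf{c}^\top\mathbf{x} : A\mathbf{x}=\mathbf{b},\ \mathbf{0}\le\mathbf{x}\le\mathbf{u},\ \mathbf{x}\in\mathbb{Z}^n\}$. Then: (i) for every feasible $\mathbf{x}$ and every $\mathbf{z}\in\mathbb{Z}^n\setminus\{\mathbf{0}\}$ with $A\mathbf{z}=\mathbf{0}$ and $\mathbf{x}+\mathbf{z}$ feasible, there exists $\mathbf{g}\in\mathcal{G}(A)$ with $\mathbf{x}+\mathbf{g}$ feasible and $-\mathbf{c}^\top\mathbf{g}/\|\mathbf{g}\|_1\ge-\mathbf{c}^\top\mathbf{z}/\|\mathbf{z}\|_1$; hence a discrete steepest-descent direction is a steepest-descent direction among all nonzero integer directions applicable at $\mathbf{x}$; (ii) from any feasible solution $\mathbf{x}_0$, every sequence of discrete steepest-descent augmentations reaches an optimal solution after at most $|\mathcal{G}(A)|$ augmentations.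
   Context: Feasible solutions are the $\mathbf{x}\in\mathbb{Z}^n$ with $A\mathbf{x}=\mathbf{b}$, $\mathbf{0}\le\mathbf{x}\le\mathbf{u}$. For $\mathbf{v},\mathbf{w}\in\mathbb{R}^n$ write $\mathbf{v}\sqsubseteq\mathbf{w}$ if $v_iw_i\ge0$ and $|v_i|\le|w_i|$ for all $i$. The Graver basis $\mathcal{G}(A)$ is the set of $\sqsubseteq$-minimal elements of $(\ker(A)\cap\mathbb{Z}^n)\setminus\{\mathbf{0}\}$. Discrete steepest-descent augmentation: given a feasible $\mathbf{x}_k$, choose $\mathbf{z}\in\mathcal{G}(A)$ maximizing $-\mathbf{c}^\top\mathbf{z}/\|\mathbf{z}\|_1$ among all $\mathbf{z}\in\mathcal{G}(A)$ with $\mathbf{x}_k+\mathbf{z}$ feasible; if this maximum is positive, let $\alpha$ be the largest integer with $\mathbf{x}_k+\alpha\mathbf{z}$ feasible and set $\mathbf{x}_{k+1}:=\mathbf{x}_k+\alpha\mathbf{z}$, otherwise stop. *)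

From HB Require Import structures.
From mathcomp Require Import all_boot all_order all_algebra.
Set Implicit Arguments. Unset Strict Implicit. Unset Printing Implicit Defensive.
Import Order.TTheory GRing.Theory Num.Theory.
Local Open Scope ring_scope.

Notation ivec n := 'cV[int]_n.

Definition dotv (n : nat) (c x : ivec n) : int := \sum_(i < n) c i 0 * x i 0.

Definition norm1 (n : nat) (z : ivec n) : int := \sum_(i < n) `|z i 0|.

Definition gratio (n : nat) (c z : ivec n) : rat :=
  (- dotv c z)%:~R / (norm1 z)%:~R.

Definition ilp_feasible (d n : nat) (A : 'M[int]_(d, n)) (b : ivec d) (u : ivec n)
  (x : ivec n) : Prop :=
  A *m x = b /\ (forall i : 'I_n, 0 <= x i 0 /\ x i 0 <= u i 0).

Definition conf_le (n : nat) (v w : ivec n) : Prop :=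
  forall i : 'I_n, 0 <= v i 0 * w i 0 /\ `|v i 0| <= `|w i 0|.

Definition graver_elt (d n : nat) (A : 'M[int]_(d, n)) (z : ivec n) : Prop :=
  A *m z = 0 /\ z != 0 /\
  (forall w : ivec n, A *m w = 0 -> w != 0 -> conf_le w z -> w = z).

Definition ilp_optimal (d n : nat) (A : 'M[int]_(d, n)) (b : ivec d) (u c : ivec n)
  (x : ivec n) : Prop :=
  ilp_feasible A b u x /\ (forall y, ilp_feasible A b u y -> dotv c x <= dotv c y).

Definition sd_direction (d n : nat) (A : 'M[int]_(d, n)) (b : ivec d) (u c : ivec n)
  (x z : ivec n) : Prop :=
  graver_elt A z /\ ilp_feasible A b u (x + z) /\
  (forall g, graver_elt A g -> ilp_feasible A b u (x + g) -> gratio c g <= gratio c z).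

Definition sd_step (d n : nat) (A : 'M[int]_(d, n)) (b : ivec d) (u c : ivec n)
  (x y : ivec n) : Prop :=
  exists z, sd_direction A b u c x z /\ 0 < gratio c z /\
   exists alpha : int,
     ilp_feasible A b u (x + alpha *: z) /\
     (forall beta : int, ilp_feasible A b u (x + beta *: z) -> beta <= alpha) /\
     y = x + alpha *: z.

Definition sd_stopped (d n : nat) (A : 'M[int]_(d, n)) (b : ivec d) (u c : ivec n)
  (x : ivec n) : Prop :=
  ~ (exists z, graver_elt A z /\ ilp_feasible A b u (x + z) /\ 0 < gratio c z).

From HB Require Import structures.
From mathcomp Require Import all_boot all_order all_algebra.
From mathcomp Require Import zify ring lra.
From Stdlib Require Import Classical.
Import Order.TTheory GRing.Theory Num.Theory.
Local Open Scope ring_scope.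

Set Implicit Arguments.
Unset Strict Implicit.

(* A nonzero applicable integral direction w lies conformally above a Graver
   element g.  Both g and w - g are applicable, and w = g + (w - g) adds their
   1-norms, so the ratio of w is a mediant of theirs; induction on the 1-norm of
   w yields an applicable Graver element whose ratio is at least that of w.

   Along a steepest-descent run the ratios r_j of the chosen directions never
   increase, and every partial sum x_j - x_i has ratio at least r_j.  If a Graver
   element z were chosen at steps i < j, then x_j + z - x_i would be applicable
   at x_i with ratio at least r_i, hence exactly r_i by the first part; this
   forces (alpha + 1) z to lie conformally below it, contradicting the
   maximality of the step length alpha.  So the chosen directions are distinct
   Graver elements, and a stopped run is optimal by the first part applied to
   y - x for a better solution y. *)

Lemma conf_le_int (a b : int) : (0 <= a * b /\ `|a| <= `|b|) <-> `|a| + `|b - a| = `|b|.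
Proof.
split=> [[ab ab']|e]; last split.
all: by case: (lerP 0 a) => a0; case: (lerP 0 b) => b0; nia.
Qed.

Lemma conf_le_int_bounds (x u v w : int) :
  0 <= x /\ x <= u -> 0 <= x + w /\ x + w <= u -> 0 <= v * w /\ `|v| <= `|w| ->
  0 <= x + v /\ x + v <= u.
Proof. by case: (lerP 0 v) => v0; case: (lerP 0 w) => w0; nia. Qed.

Section ConformalOrder.
Variable n : nat.
Implicit Types (c x y v w : 'cV[int]_n) (a : int).

Lemma dotvD c x y : dotv c (x + y) = dotv c x + dotv c y.
Proof. by rewrite /dotv -big_split; apply: eq_bigr => i _; rewrite mxE mulrDr. Qed.

Lemma dotvZ c a x : dotv c (a *: x) = a * dotv c x.
Proof. by rewrite /dotv mulr_sumr; apply: eq_bigr => i _; rewrite mxE mulrCA. Qed.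

Lemma dotvN c x : dotv c (- x) = - dotv c x.
Proof. by rewrite -scaleN1r dotvZ mulN1r. Qed.

Lemma dotv0 c : dotv c 0 = 0.
Proof. by rewrite -(scale0r 0) dotvZ mul0r. Qed.

Lemma norm1_ge0 x : 0 <= norm1 x.
Proof. exact: sumr_ge0. Qed.

Lemma norm1D x y : norm1 (x + y) <= norm1 x + norm1 y.
Proof. by rewrite /norm1 -big_split; apply: ler_sum => i _; rewrite mxE ler_normD. Qed.

Lemma norm1Z a x : norm1 (a *: x) = `|a| * norm1 x.
Proof. by rewrite /norm1 mulr_sumr; apply: eq_bigr => i _; rewrite mxE normrM. Qed.

Lemma norm10 : norm1 (0 : 'cV[int]_n) = 0.
Proof. by rewrite -(scale0r 0) norm1Z normr0 mul0r. Qed.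

Lemma norm1_eq0 x : (norm1 x == 0) = (x == 0).
Proof.
apply/eqP/eqP => [x0|->]; last exact: norm10.
apply/matrixP => i j; rewrite ord1 mxE; apply/normr0_eq0.
exact: (psumr_eq0P _ x0).
Qed.

Lemma norm1_gt0 x : (0 < norm1 x) = (x != 0).
Proof. by rewrite lt_def norm1_eq0 norm1_ge0 andbT. Qed.

Lemma norm1_ind (P : 'cV[int]_n -> Prop) :
  (forall v, (forall w, norm1 w < norm1 v -> P w) -> P v) -> forall v, P v.
Proof.
move=> IH v; have [m] := ubnP (absz (norm1 v)); elim: m v => // m IHm v lt_vm.
by apply: IH => w lt_wv; apply: IHm; have := norm1_ge0 w; lia.
Qed.

Lemma conf_leP v w : conf_le v w <-> norm1 v + norm1 (w - v) = norm1 w.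
Proof.
split=> [vw|e i].
  by rewrite /norm1 -big_split /=; apply: eq_bigr => i _; rewrite !mxE; apply/conf_le_int.
have F0 j : true -> 0 <= `|v j 0| + `|(w - v) j 0| - `|w j 0|.
  by rewrite subr_ge0 -{1}(subrKC (v j 0) (w j 0)) !mxE ler_normD.
have := psumr_eq0P F0 _ (i := i) isT.
rewrite sumrB big_split /= e subrr !mxE => /(_ erefl) /eqP.
by rewrite subr_eq0 => /eqP /conf_le_int.
Qed.

Lemma conf_le_refl v : conf_le v v.
Proof. by apply/conf_leP; rewrite subrr norm10 addr0. Qed.

Lemma conf_le_subr v w : conf_le v w -> conf_le (w - v) w.
Proof. by move/conf_leP=> e; apply/conf_leP; rewrite subKr addrC. Qed.

Lemma conf_le_trans x v w : conf_le x v -> conf_le v w -> conf_le x w.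
Proof.
move=> /conf_leP xv /conf_leP vw; apply/conf_leP/eqP.
have tri : norm1 w <= norm1 x + norm1 (w - x) by rewrite -{1}(subrKC x w) norm1D.
rewrite eq_le tri andbT -vw -xv -addrA lerD2l.
have -> : w - x = (v - x) + (w - v) by rewrite [RHS]addrC addrA subrK.
exact: norm1D.
Qed.

Lemma conf_le_norm1_lt v w : conf_le v w -> v != w -> norm1 v < norm1 w.
Proof.
by move=> /conf_leP <- vw; rewrite ltrDl norm1_gt0 subr_eq0 eq_sym.
Qed.

Lemma ilp_feasible_conf_le d (A : 'M[int]_(d, n)) b u x v w :
  ilp_feasible A b u x -> ilp_feasible A b u (x + w) -> A *m v = 0 -> conf_le v w ->
  ilp_feasible A b u (x + v).
Proof.
move=> [Ax xb] [_ xwb] Av vw; split=> [|i]; first by rewrite mulmxDr Ax Av addr0.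
by move: (xb i) (xwb i) (vw i); rewrite !mxE; exact: conf_le_int_bounds.
Qed.

Lemma graver_le d (A : 'M[int]_(d, n)) v :
  A *m v = 0 -> v != 0 -> exists2 g, graver_elt A g & conf_le g v.
Proof.
elim/norm1_ind: v => v IH Av v0.
have [vG|vNG] := classic (graver_elt A v); first by exists v; last exact: conf_le_refl.
have [w [Aw w0 wv wNv]] : exists w, [/\ A *m w = 0, w != 0, conf_le w v & w <> v].
  apply: NNPP => noW; apply: vNG; split=> //; split=> // w Aw w0 wv.
  by apply: NNPP => wNv; apply: noW; exists w.
have [g gG gw] := IH w (conf_le_norm1_lt wv (introN eqP wNv)) Aw w0.
by exists g => //; exact: conf_le_trans gw wv.
Qed.
End ConformalOrder.

Section Excess.
Variables (n : nat) (c : 'cV[int]_n).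
Implicit Types (x y z : 'cV[int]_n) (r : rat).

Definition gain z : rat := (- dotv c z)%:~R.
Definition norm1q z : rat := (norm1 z)%:~R.
Definition excess r z := gain z - r * norm1q z.

Lemma norm1q_ge0 z : 0 <= norm1q z.
Proof. by rewrite ler0z norm1_ge0. Qed.

Lemma gainD x y : gain (x + y) = gain x + gain y.
Proof. by rewrite /gain dotvD opprD intrD. Qed.

Lemma gainZ (a : int) z : gain (a *: z) = a%:~R * gain z.
Proof. by rewrite /gain dotvZ -mulrN intrM. Qed.

Lemma gain0 : gain 0 = 0.
Proof. by rewrite /gain dotv0. Qed.

Lemma excess0 r : excess r 0 = 0.
Proof. by rewrite /excess gain0 /norm1q norm10 mulr0 subrr. Qed.

Lemma excess_gratio z : excess (gratio c z) z = 0.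
Proof.
have [->|z0] := eqVneq z 0; first exact: excess0.
by rewrite /excess divfK ?subrr // intr_eq0 norm1_eq0.
Qed.

Lemma excess_ge0 r z : z != 0 -> (0 <= excess r z) = (r <= gratio c z).
Proof. by move=> z0; rewrite subr_ge0 /gratio ler_pdivlMr // ltr0z norm1_gt0. Qed.

Lemma excess_gt0 r z : z != 0 -> (0 < excess r z) = (r < gratio c z).
Proof. by move=> z0; rewrite subr_gt0 /gratio ltr_pdivlMr // ltr0z norm1_gt0. Qed.

Lemma gain_gt0 z : z != 0 -> (0 < gain z) = (0 < gratio c z).
Proof. by move=> z0; rewrite -excess_gt0 // /excess mul0r subr0. Qed.

Lemma excessZ r (a : int) z : 0 <= a -> excess r (a *: z) = a%:~R * excess r z.
Proof.
by move=> a0; rewrite /excess gainZ /norm1q norm1Z ger0_norm // intrM mulrBr mulrCA.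
Qed.

Lemma le_excess r r' z : r <= r' -> excess r' z <= excess r z.
Proof. by move=> rr'; rewrite lerD2l lerN2 ler_wpM2r ?norm1q_ge0. Qed.

Lemma excess_superadd r x y : 0 <= r -> excess r x + excess r y <= excess r (x + y).
Proof.
move=> r0; have : norm1q (x + y) <= norm1q x + norm1q y by rewrite -intrD ler_int norm1D.
rewrite /excess gainD; nra.
Qed.

Lemma excess_conf_le r x y : conf_le x (x + y) -> excess r (x + y) = excess r x + excess r y.
Proof.
move/conf_leP; rewrite [x + y - x]addrC addKr => e.
by rewrite /excess gainD /norm1q -e intrD; ring.
Qed.

Lemma conf_le_of_excess r x y :
  0 < r -> excess r (x + y) <= excess r x + excess r y -> conf_le x (x + y).
Proof.
move=> r0 le_xy; apply/conf_leP; rewrite [x + y - x]addrC addKr; apply/eqP; rewrite eq_le norm1D andbT.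
rewrite -(ler_int rat) intrD -!/(norm1q _) -(ler_pM2l r0).
by move: le_xy; rewrite /excess gainD; lra.
Qed.
End Excess.

Lemma bounded_nat_choice (T : Type) (t0 : T) (P : nat -> T -> Prop) k :
  (forall i, (i < k)%N -> exists t, P i t) ->
  exists f : nat -> T, forall i, (i < k)%N -> P i (f i).
Proof.
elim: k => [|k IH] exP; first by exists (fun=> t0).
have [f Pf] := IH (fun i lt_ik => exP i (ltnW lt_ik)).
have [t Pt] := exP k (ltnSn k).
exists (fun i => if i == k then t else f i) => i.
rewrite ltnS leq_eqVlt; case/orP=> [/eqP->|lt_ik]; first by rewrite eqxx.
by rewrite ltn_eqF //; exact: Pf.
Qed.

Section SteepestDescent.
Variables (d n : nat) (A : 'M[int]_(d, n)) (b : 'cV[int]_d) (u c : 'cV[int]_n).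
Local Notation feasible := (ilp_feasible A b u).
Implicit Types (x y z g w : 'cV[int]_n).

Lemma ilp_feasible_ker x w : feasible x -> feasible (x + w) -> A *m w = 0.
Proof. by move=> [Ax _] [+ _]; rewrite mulmxDr Ax -{2}[b]addr0 => /addrI. Qed.

Lemma graver_dominates x w :
  feasible x -> w != 0 -> A *m w = 0 -> feasible (x + w) ->
  exists g, graver_elt A g /\ feasible (x + g) /\ gratio c w <= gratio c g.
Proof.
move=> xF; elim/norm1_ind: w => w IH w0 Aw xwF.
have [g gG gw] := graver_le Aw w0; have [Ag [g0 _]] := gG.
have xgF := ilp_feasible_conf_le xF xwF Ag gw.
have [<-|gNw] := eqVneq g w; first by exists g.
set h := w - g.
have hw : conf_le h w := conf_le_subr gw.
have Ah : A *m h = 0 by rewrite mulmxBr Aw Ag subrr.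
have h0 : h != 0 by rewrite subr_eq0 eq_sym.
have lt_hw : norm1 h < norm1 w by move/conf_leP: gw => <-; rewrite ltrDr norm1_gt0.
have xhF := ilp_feasible_conf_le xF xwF Ah hw.
have ghw : conf_le g (g + h) by rewrite /h subrKC.
have := excess_conf_le c (gratio c w) ghw; rewrite /h subrKC excess_gratio => split_w.
have [ge|gl] := lerP 0 (excess c (gratio c w) g).
  by exists g; rewrite -excess_ge0.
have [g' [g'G [xg'F le_hg']]] := IH h lt_hw h0 Ah xhF.
exists g'; do 2 split=> //; apply: le_trans le_hg'.
by rewrite -excess_ge0 //; lra.
Qed.

Lemma sd_direction_steepest x g z :
  feasible x -> sd_direction A b u c x g ->
  z != 0 -> A *m z = 0 -> feasible (x + z) -> gratio c z <= gratio c g.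
Proof.
move=> xF [_ [_ g_max]] z0 Az xzF.
have [g' [g'G [xg'F le_zg']]] := graver_dominates xF z0 Az xzF.
exact: le_trans le_zg' (g_max _ g'G xg'F).
Qed.

Lemma gratio_le_after_augment x z (a : int) g :
  feasible x -> sd_direction A b u c x z -> 0 <= gratio c z -> 0 <= a ->
  graver_elt A g -> feasible (x + a *: z + g) -> gratio c g <= gratio c z.
Proof.
move=> xF zsd z_ge0 a0 [Ag [g0 _]] xgF; rewrite leNgt; apply/negP => lt_zg.
have [[Az _] _] := zsd.
set r := gratio c z; set w := a *: z + g.
have pos_w : 0 < excess c r w.
  apply: lt_le_trans (excess_superadd _ _ _ z_ge0).
  by rewrite excessZ // excess_gratio mulr0 add0r excess_gt0.
have w0 : w != 0 by apply: contraTneq pos_w => ->; rewrite excess0 ltxx.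
have Aw : A *m w = 0 by rewrite mulmxDr -scalemxAr Az Ag scaler0 addr0.
have := sd_direction_steepest xF zsd w0 Aw; rewrite addrA => /(_ xgF).
by rewrite leNgt -excess_gt0 // pos_w.
Qed.

Lemma sd_stopped_optimal x : feasible x -> sd_stopped A b u c x -> ilp_optimal A b u c x.
Proof.
move=> xF stop; split=> // y yF; rewrite leNgt; apply/negP => lt_yx.
have xyF : feasible (x + (y - x)) by rewrite subrKC.
have Ayx := ilp_feasible_ker xF xyF.
have yx0 : y - x != 0 by rewrite subr_eq0; apply: contraTneq lt_yx => ->; rewrite ltxx.
have [g [gG [xgF le_g]]] := graver_dominates xF yx0 Ayx xyF.
apply: stop; exists g; do 2 split=> //; apply: lt_le_trans le_g.
by rewrite -gain_gt0 // /gain dotvD dotvN opprB ltr0z subr_gt0.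
Qed.

Definition sd_step_along x y z :=
  sd_direction A b u c x z /\ 0 < gratio c z /\
  exists alpha : int, feasible (x + alpha *: z) /\
    (forall beta : int, feasible (x + beta *: z) -> beta <= alpha) /\ y = x + alpha *: z.

Lemma sd_step_along_alpha x y z : sd_step_along x y z ->
  exists2 alpha : int, 1 <= alpha &
    y = x + alpha *: z /\ forall beta : int, feasible (x + beta *: z) -> beta <= alpha.
Proof.
move=> [[_ [xzF _]] [_ [alpha [_ [alpha_max ->]]]]]; exists alpha => //.
by apply: alpha_max; rewrite scale1r.
Qed.

Section Run.
Variables (k : nat) (xs zs : nat -> 'cV[int]_n).
Hypothesis xs0F : feasible (xs 0).
Hypothesis run_step : forall i, (i < k)%N -> sd_step_along (xs i) (xs i.+1) (zs i).

Lemma run_feasible i : (i <= k)%N -> feasible (xs i).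
Proof.
case: i => // i lt_ik.
by have [_ [_ [alpha [xF [_ ->]]]]] := run_step lt_ik.
Qed.

Lemma run_gratio_succ i : (i.+1 < k)%N -> gratio c (zs i.+1) <= gratio c (zs i).
Proof.
move=> lt_i1k; have lt_ik := ltnW lt_i1k.
have [zsd [zpos _]] := run_step lt_ik.
have [alpha alpha1 [xs_i1 _]] := sd_step_along_alpha (run_step lt_ik).
have [[z'G [xz'F _]] _] := run_step lt_i1k.
apply: (gratio_le_after_augment (run_feasible (ltnW lt_ik)) zsd (ltW zpos) _ z'G).
  exact: le_trans alpha1.
by rewrite -xs_i1.
Qed.

Lemma run_excess i j : (i <= j)%N -> (j < k)%N ->
  0 <= excess c (gratio c (zs j)) (xs j - xs i).
Proof.
elim: j => [|j IH]; first by rewrite leqn0 => /eqP -> _; rewrite subrr excess0.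
rewrite leq_eqVlt => /orP[/eqP -> _|lt_ij1 lt_j1k]; first by rewrite subrr excess0.
have lt_jk := ltnW lt_j1k.
have [alpha alpha1 [-> _]] := sd_step_along_alpha (run_step lt_jk).
have [_ [r_gt0 _]] := run_step lt_j1k.
have r_le := run_gratio_succ lt_j1k.
rewrite addrAC; apply: le_trans (excess_superadd _ _ _ (ltW r_gt0)); apply: addr_ge0.
  exact: le_trans (IH lt_ij1 lt_jk) (le_excess _ _ r_le).
have alpha0 : 0 <= alpha by exact: le_trans alpha1.
by rewrite excessZ // mulr_ge0 ?ler0z // -(excess_gratio c (zs j)) le_excess.
Qed.

Lemma run_directions_neq i j : (i < j)%N -> (j < k)%N -> zs i != zs j.
Proof.
move=> lt_ij lt_jk; apply/eqP => zij.
have lt_ik := ltn_trans lt_ij lt_jk.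
have xiF := run_feasible (ltnW lt_ik).
have [zsd [zpos _]] := run_step lt_ik.
have [[Az [z0 _]] _] := zsd.
have [alpha alpha1 [xs_i1 alpha_max]] := sd_step_along_alpha (run_step lt_ik).
have [[_ [xjzF _]] _] := run_step lt_jk.
set r := gratio c (zs i) in zpos.
set P := (alpha + 1) *: zs i; set Q := xs j - xs i.+1.
have alpha0 : 0 <= alpha + 1 by lia.
have xPQF : feasible (xs i + (P + Q)).
  suff -> : xs i + (P + Q) = xs j + zs j by [].
  by rewrite /P /Q xs_i1 zij; apply/matrixP => p q; rewrite !mxE; ring.
have AP : A *m P = 0 by rewrite /P -scalemxAr Az scaler0.
have exP : excess c r P = 0 by rewrite excessZ // excess_gratio mulr0.
have exQ : 0 <= excess c r Q by rewrite /r zij; exact: run_excess.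
have PQ0 : P + Q != 0.
  have gain_P : 0 < gain c P by rewrite gainZ mulr_gt0 ?gain_gt0 // ltr0z; lia.
  have gain_Q : 0 <= gain c Q.
    by move: exQ; rewrite subr_ge0; apply: le_trans; rewrite mulr_ge0 ?norm1q_ge0 ?ltW.
  have : 0 < gain c (P + Q) by rewrite gainD; lra.
  by apply: contraTneq => ->; rewrite gain0 ltxx.
have exPQ : excess c r (P + Q) <= 0.
  rewrite leNgt excess_gt0 // -leNgt.
  exact: sd_direction_steepest xiF zsd PQ0 (ilp_feasible_ker xiF xPQF) xPQF.
have PQ_conf : conf_le P (P + Q).
  by apply: (conf_le_of_excess (c := c) zpos); rewrite exP add0r (le_trans exPQ exQ).
have := alpha_max _ (ilp_feasible_conf_le xiF xPQF AP PQ_conf); lia.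
Qed.

Lemma run_length_le (s : seq 'cV[int]_n) :
  (forall z, graver_elt A z -> z \in s) -> (k <= size s)%N.
Proof.
move=> sG; have uniq_zs : uniq [seq zs i | i <- iota 0 k].
  rewrite map_inj_in_uniq ?iota_uniq // => i j; rewrite !mem_iota /= => lt_ik lt_jk zij.
  case: (ltngtP i j) => // [lt_ij|lt_ji].
    by move: (run_directions_neq lt_ij lt_jk); rewrite zij eqxx.
  by move: (run_directions_neq lt_ji lt_ik); rewrite zij eqxx.
rewrite -(size_iota 0 k) -(size_map zs); apply: uniq_leq_size uniq_zs _.
move=> z /mapP[i]; rewrite mem_iota /= => lt_ik ->.
by apply: sG; have [[]] := run_step lt_ik.
Qed.
End Run.
End SteepestDescent.

Theorem theorem1 (d n : nat) (A : 'M[int]_(d, n)) (b : 'cV[int]_d)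
  (c u : 'cV[int]_n) (hu : forall i : 'I_n, 0 <= u i 0) :
  (* (i) *)
  (forall x z : 'cV[int]_n,
     ilp_feasible A b u x -> z != 0 -> A *m z = 0 -> ilp_feasible A b u (x + z) ->
     exists g, graver_elt A g /\ ilp_feasible A b u (x + g) /\ gratio c z <= gratio c g)
  /\
  (* (i), consequence: a discrete steepest-descent direction is steepest among
     all nonzero integral directions applicable at x *)
  (forall x g z : 'cV[int]_n,
     ilp_feasible A b u x -> sd_direction A b u c x g ->
     z != 0 -> A *m z = 0 -> ilp_feasible A b u (x + z) ->
     gratio c z <= gratio c g)
  /\
  (* (ii): s is a (duplicate-free) enumeration of G(A), so |G(A)| = size s *)
  (forall s : seq 'cV[int]_n,
     uniq s -> (forall z, z \in s <-> graver_elt A z) ->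
     forall (x0 : 'cV[int]_n), ilp_feasible A b u x0 ->
     forall (k : nat) (xs : nat -> 'cV[int]_n),
       xs 0%N = x0 ->
       (forall i : nat, (i < k)%N -> sd_step A b u c (xs i) (xs i.+1)) ->
       (k <= size s)%N /\
       (sd_stopped A b u c (xs k) -> ilp_optimal A b u c (xs k))).
Proof.
split; first exact: graver_dominates.
split; first exact: sd_direction_steepest.
move=> s _ sG x0 + k xs xs0; rewrite -xs0 => xs0F steps.
have [zs run_step] :=
  bounded_nat_choice (P := fun i => sd_step_along A b u c (xs i) (xs i.+1)) 0 steps.
split; first by apply: (run_length_le xs0F run_step) => z /sG.
by apply: sd_stopped_optimal; apply: (run_feasible xs0F run_step).
Qed.
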